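(* Let $f$ be convex, continuously differentiable, with minimizer $x^*$, minimum value $f^*$ and coordinate-wise Lipschitz constants $L_i>0$, and fix $\alpha\ge0$. Assume $\sigma_{1-\alpha}>0$ (defined with respect to the $\tilde L$-weighted norm below). Fix $x_0\in\mathbb{R}^n$ and put $\theta=\sqrt{\sigma_{1-\alpha}/(2\tilde S_\alpha n)}$, $\zeta_0=\sigma_{1-\alpha}$, $v_0=x_0$, $\phi_0(x)=f(x_0)+\frac{\sigma_{1-\alpha}}{2}\|x-x_0\|_{1-\alpha}^2$. Construct $\phi_k,\zeta_k,v_k$ by the recursion $\zeta_{k+1}=(1-\theta)\zeta_k+\theta\sigma_{1-\alpha}$ (so $\zeta_k=\sigma_{1-\alpha}$), $v_{k+1}=\frac{1}{\zeta_{k+1}}\big[(1-\theta)\zeta_kv_k+\theta\sigma_{1-\alpha}y_k-\frac{\tilde S_\alpha\theta}{\tilde L_{i_k}}\vec f_{i_k}(y_k)\big]$, where $i_0,i_1,\dots$ are independent with $\Pr[i_k=i]=\tilde L_i^\alpha/\tilde S_\alpha$, $y_0=x_0$, and for $k\ge1$ $$x_k=y_{k-1}-\tfrac{1}{\tilde L_{i_{k-1}}}\vec f_{i_{k-1}}(y_{k-1}),\qquad y_k\ \text{ determined by }\ \tfrac{\theta\zeta_k}{\zeta_{k+1}}(v_k-y_k)+x_k-y_k=0.$$ Then for all $k\ge0$, $$\mathbb{E}[f(x_k)]-f^*\le\Big(1-\tfrac12\sqrt{\tfrac{\sigma_{1-\alpha}}{S_\alpha n}}\Big)^k\Big(f(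x_0)-f^*+\sigma_{1-\alpha}\|x^*-x_0\|_{1-\alpha}^2\Big).$$
   Context: $f_i(x)=e_i^T\nabla f(x)$, $\vec f_i(x)=f_i(x)e_i$; $L_i$ are coordinate-wise Lipschitz constants: $|f_i(x+te_i)-f_i(x)|\le L_i|t|$. $S_\alpha=\sum_iL_i^\alpha$. Define $\tilde L_i$ by $\tilde L_i^\alpha=\max(L_i^\alpha,S_\alpha/n)$ (for $\alpha=0$, $\tilde L_i=L_i$) and $\tilde S_\alpha=\sum_i\tilde L_i^\alpha$; the $\tilde L_i$ are again coordinate-wise Lipschitz constants and $S_\alpha\le\tilde S_\alpha\le2S_\alpha$. In this statement $\|x\|_{1-\alpha}=\sqrt{\sum_i\tilde L_i^{1-\alpha}x_i^2}$ (for $\alpha=1$ this is the Euclidean norm), and $\sigma_{1-\alpha}$ is a convexity parameter of $f$ with respect to it: $f(y)\ge f(x)+\langle\nabla f(x),y-x\rangle+\frac{\sigma_{1-\alpha}}2\|y-x\|_{1-\alpha}^2$ for all $x,y$. *)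

(* classical reals. Vectors of R^n are encoded as nat -> R,
   with only coordinates 0..n-1 meaningful (f is required to depend only on them). *)
From Stdlib Require Import Reals Lra List.
Open Scope R_scope.

Definition vec := nat -> R.

Fixpoint sumR (n : nat) (g : nat -> R) : R :=
  match n with O => 0 | S m => sumR m g + g m end.

Definition unitv (i : nat) : vec := fun j => if Nat.eq_dec j i then 1 else 0.
Definition vadd (x y : vec) : vec := fun j => x j + y j.
Definition vscal (a : R) (x : vec) : vec := fun j => a * x j.

Definition S_pow (n : nat) (L : nat -> R) (a : R) : R :=
  sumR n (fun i => Rpower (L i) a).

(* tilde L_i : tilde L_i^alpha = max(L_i^alpha, S_alpha/n); tilde L_i = L_i if alpha = 0 *)
Definition Ltil (n : nat) (L : nat -> R) (a : R) (i : nat) : R :=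
  if Req_EM_T a 0 then L i
  else Rpower (Rmax (Rpower (L i) a) (S_pow n L a / INR n)) (/ a).

Definition Stil (n : nat) (L : nat -> R) (a : R) : R := S_pow n (Ltil n L a) a.

Definition wnorm2 (n : nat) (L : nat -> R) (a : R) (x : vec) : R :=
  sumR n (fun i => Rpower (Ltil n L a i) (1 - a) * (x i) ^ 2).

Definition prob (n : nat) (L : nat -> R) (a : R) (i : nat) : R :=
  Rpower (Ltil n L a i) a / Stil n L a.

Definition theta (n : nat) (L : nat -> R) (a sigma : R) : R :=
  sqrt (sigma / (2 * Stil n L a * INR n)).

(* state (x_k, y_k, v_k, zeta_k) *)
Definition state := (vec * vec * vec * R)%type.

Definition step (n : nat) (L : nat -> R) (a sigma : R) (g : vec -> nat -> R)
  (s : state) (i : nat) : state :=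
  let '(x, y, v, z) := s in
  let th := theta n L a sigma in
  let z1 := (1 - th) * z + th * sigma in
  let z2 := (1 - th) * z1 + th * sigma in
  let Li := Ltil n L a i in
  let gi := g y i in
  let v1 : vec := fun j =>
      ((1 - th) * z * v j + th * sigma * y j
       - Stil n L a * th / Li * (gi * unitv i j)) / z1 in
  let x1 : vec := fun j => y j - / Li * (gi * unitv i j) in
  (* y_{k+1} is the unique solution of c (v_{k+1} - y) + x_{k+1} - y = 0,
     c = theta zeta_{k+1} / zeta_{k+2} *)
  let c := th * z1 / z2 in
  let y1 : vec := fun j => (c * v1 j + x1 j) / (c + 1) in
  (x1, y1, v1, z1).

Definition iterate (n : nat) (L : nat -> R) (a sigma : R) (g : vec -> nat -> R)
  (x0 : vec) (l : list nat) : state :=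
  fold_left (step n L a sigma g) l (x0, x0, x0, sigma).

Definition xk (s : state) : vec := let '(x, _, _, _) := s in x.

(* Expectation of F(i_0,...,i_{k-1}) over i.i.d. indices in {0..n-1} with law p *)
Fixpoint Eseq (n : nat) (p : nat -> R) (k : nat) (F : list nat -> R) : R :=
  match k with
  | O => F nil
  | S k' => sumR n (fun i => p i * Eseq n p k' (fun l => F (i :: l)))
  end.

From Stdlib Require Import Reals Lra Lia List Psatz FunctionalExtensionality.
Open Scope R_scope.

(* The proof is a potential-function argument.  With theta as in the
   method, the iterates always satisfy zeta_k = sigma and
   theta (v_k - y_k) + x_k - y_k = 0 (lemma [step_invariant]).  For the
   potential  Phi_k = f(x_k) - f* + sigma/2 ||v_k - x*||^2  we show that one
   step contracts it in expectation by the factor 1 - theta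
   ([step_potential_contraction]): the gradient step on x gains
   f_i(y)^2 / (2 tilde L_i) by the coordinate descent lemma, which pays for the
   quadratic term created in v, and strong convexity at y closes the estimate.
   Iterating ([potential_contraction]) and comparing 1 - theta with
   1 - 1/2 sqrt(sigma / (S_alpha n)) via tilde S_alpha <= 2 S_alpha gives the
   theorem. *)

Lemma sumR_ext n a b : (forall i, (i < n)%nat -> a i = b i) -> sumR n a = sumR n b.
Proof.
  induction n as [|n IH]; simpl; intros H; auto.
  rewrite IH by (intros; apply H; lia). rewrite H by lia. reflexivity.
Qed.

Lemma sumR_le n a b : (forall i, (i < n)%nat -> a i <= b i) -> sumR n a <= sumR n b.
Proof.
  induction n as [|n IH]; simpl; intros H; [lra|].
  assert (a n <= b n) by (apply H; lia).
  assert (sumR n a <= sumR n b) by (apply IH; intros; apply H; lia). lra.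
Qed.

Lemma sumR_plus n a b : sumR n (fun i => a i + b i) = sumR n a + sumR n b.
Proof. induction n as [|n IH]; simpl; [lra|]. rewrite IH; lra. Qed.

Lemma sumR_scal n c a : sumR n (fun i => c * a i) = c * sumR n a.
Proof. induction n as [|n IH]; simpl; [lra|]. rewrite IH; lra. Qed.

Lemma sumR_const n c : sumR n (fun _ => c) = INR n * c.
Proof. induction n as [|n IH]; simpl sumR; [simpl; lra|]. rewrite IH, S_INR; lra. Qed.

Lemma sumR_unit n i h : (i < n)%nat -> sumR n (fun j => h j * unitv i j) = h i.
Proof.
  induction n as [|n IH]; intros Hi; [lia|]. simpl. unfold unitv at 2.
  destruct (Nat.eq_dec n i) as [->|Hne].
  - rewrite (sumR_ext _ _ (fun _ => 0)), sumR_const; [lra|].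
    intros j Hj. unfold unitv. destruct (Nat.eq_dec j i); [lia|lra].
  - rewrite IH by lia. lra.
Qed.

Lemma sumR_nonneg n a : (forall i, (i < n)%nat -> 0 <= a i) -> 0 <= sumR n a.
Proof. intros H. rewrite <- (Rmult_0_r (INR n)), <- sumR_const. apply sumR_le; auto. Qed.

Lemma sumR_term n a i : (forall j, (j < n)%nat -> 0 <= a j) -> (i < n)%nat ->
  a i <= sumR n a.
Proof.
  induction n as [|n IH]; intros H Hi; [lia|]. simpl.
  assert (0 <= sumR n a) by (apply sumR_nonneg; intros; apply H; lia).
  assert (0 <= a n) by (apply H; lia).
  destruct (Nat.eq_dec i n) as [->|Hne]; [lra|].
  assert (a i <= sumR n a) by (apply IH; [intros; apply H; lia | lia]). lra.
Qed.

Lemma Rpower_gt0 x y : 0 < Rpower x y.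
Proof. apply exp_pos. Qed.

Lemma Rpower_0r x : Rpower x 0 = 1.
Proof. unfold Rpower. rewrite Rmult_0_l. apply exp_0. Qed.

(* x = x^a x^(1-a): this splits tilde L_i into the sampling weight and the
   norm weight. *)
Lemma Rpower_split x a : 0 < x -> x = Rpower x a * Rpower x (1 - a).
Proof.
  intros Hx. rewrite <- Rpower_plus. replace (a + (1 - a)) with 1 by ring.
  symmetry; apply Rpower_1, Hx.
Qed.

Section Weights.

Variables (n : nat) (L : nat -> R) (a : R).
Hypothesis Hn : (1 <= n)%nat.
Hypothesis HL : forall i, (i < n)%nat -> 0 < L i.
Hypothesis Ha : 0 <= a.

Lemma INR_n_pos : 0 < INR n.
Proof. apply lt_0_INR; lia. Qed.

Lemma S_pow_pos : 0 < S_pow n L a.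
Proof.
  apply Rlt_le_trans with (Rpower (L 0%nat) a); [apply Rpower_gt0|].
  apply (sumR_term n (fun i => Rpower (L i) a)); [intros; left; apply Rpower_gt0 | lia].
Qed.

(* The defining property tilde L_i^a = max(L_i^a, S_a / n); for a = 0 both
   sides equal 1. *)
Lemma Ltil_pow i : Rpower (Ltil n L a i) a = Rmax (Rpower (L i) a) (S_pow n L a / INR n).
Proof.
  pose proof INR_n_pos as Hnp.
  unfold Ltil. destruct (Req_EM_T a 0) as [->|Ha0].
  - unfold S_pow. rewrite (sumR_ext _ _ (fun _ => 1)) by (intros; apply Rpower_0r).
    rewrite sumR_const, !Rpower_0r.
    replace (INR n * 1 / INR n) with 1 by (field; lra).
    unfold Rmax. destruct (Rle_dec 1 1); lra.
  - rewrite Rpower_mult, Rinv_l by lra. apply Rpower_1.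
    apply Rlt_le_trans with (Rpower (L i) a); [apply Rpower_gt0 | apply Rmax_l].
Qed.

Lemma Ltil_pos i : (i < n)%nat -> 0 < Ltil n L a i.
Proof.
  intros Hi. unfold Ltil. destruct (Req_EM_T a 0); [apply HL, Hi | apply Rpower_gt0].
Qed.

(* tilde L_i is again a coordinate-wise Lipschitz constant. *)
Lemma L_le_Ltil i : (i < n)%nat -> L i <= Ltil n L a i.
Proof.
  intros Hi. unfold Ltil. destruct (Req_EM_T a 0) as [_|Ha0]; [lra|].
  rewrite <- (Rpower_1 (L i)) at 1 by (apply HL, Hi).
  replace 1 with (a * / a) by (field; lra). rewrite <- Rpower_mult.
  apply Rle_Rpower_l; [left; apply Rinv_0_lt_compat; lra|].
  split; [apply Rpower_gt0 | apply Rmax_l].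
Qed.

Lemma Stil_le_2S : Stil n L a <= 2 * S_pow n L a.
Proof.
  pose proof INR_n_pos. pose proof S_pow_pos.
  unfold Stil, S_pow at 1.
  rewrite (sumR_ext _ _ (fun i => Rmax (Rpower (L i) a) (S_pow n L a / INR n)))
    by (intros; apply Ltil_pow).
  apply Rle_trans with (sumR n (fun i => Rpower (L i) a + S_pow n L a / INR n)).
  - apply sumR_le. intros i _.
    assert (0 < Rpower (L i) a) by apply Rpower_gt0.
    assert (0 < S_pow n L a / INR n) by (apply Rdiv_lt_0_compat; lra).
    unfold Rmax. destruct (Rle_dec _ _); lra.
  - rewrite sumR_plus, sumR_const.
    change (sumR n (fun i => Rpower (L i) a)) with (S_pow n L a). right; field; lra.
Qed.

Lemma Stil_le_weight i : Stil n L a <= 2 * INR n * Rpower (Ltil n L a i) a.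
Proof.
  pose proof INR_n_pos.
  apply Rle_trans with (2 * S_pow n L a); [apply Stil_le_2S|].
  rewrite Ltil_pow. apply Rle_trans with (2 * INR n * (S_pow n L a / INR n)).
  - right; field; lra.
  - apply Rmult_le_compat_l; [lra | apply Rmax_r].
Qed.

Lemma Stil_pos : 0 < Stil n L a.
Proof.
  apply Rlt_le_trans with (Rpower (Ltil n L a 0) a); [apply Rpower_gt0|].
  apply (sumR_term n (fun i => Rpower (Ltil n L a i) a)); [intros; left; apply Rpower_gt0 | lia].
Qed.

Lemma prob_nonneg i : 0 <= prob n L a i.
Proof. left. apply Rdiv_lt_0_compat; [apply Rpower_gt0 | apply Stil_pos]. Qed.

Lemma prob_sum : sumR n (prob n L a) = 1.
Proof.
  pose proof Stil_pos. unfold prob.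
  rewrite (sumR_ext _ _ (fun i => / Stil n L a * Rpower (Ltil n L a i) a))
    by (intros; unfold Rdiv; ring).
  rewrite sumR_scal.
  change (sumR n (fun i => Rpower (Ltil n L a i) a)) with (Stil n L a). field. lra.
Qed.

End Weights.

Lemma wnorm2_nonneg n L a b : 0 <= wnorm2 n L a b.
Proof.
  apply sumR_nonneg. intros i _.
  apply Rmult_le_pos; [left; apply Rpower_gt0 | apply pow2_ge_0].
Qed.

Lemma wnorm2_sym n L a x y :
  wnorm2 n L a (fun j => x j - y j) = wnorm2 n L a (fun j => y j - x j).
Proof. apply sumR_ext. intros; ring. Qed.

Lemma wnorm2_unit n L a b i c : (i < n)%nat ->
  wnorm2 n L a (fun j => b j - c * unitv i j) =
  wnorm2 n L a b - 2 * c * Rpower (Ltil n L a i) (1 - a) * b i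
  + Rpower (Ltil n L a i) (1 - a) * (c * c).
Proof.
  intros Hi. unfold wnorm2.
  rewrite (sumR_ext _ _ (fun j => Rpower (Ltil n L a j) (1 - a) * b j ^ 2 +
     (Rpower (Ltil n L a j) (1 - a) * (- 2 * c * b j + c * c)) * unitv i j)).
  - rewrite sumR_plus, sumR_unit by auto. ring.
  - intros j _. unfold unitv. destruct (Nat.eq_dec j i); ring.
Qed.

Lemma wnorm2_convex n L a t p q : 0 <= t <= 1 ->
  wnorm2 n L a (fun j => (1 - t) * p j + t * q j)
  <= (1 - t) * wnorm2 n L a p + t * wnorm2 n L a q.
Proof.
  intros Ht. unfold wnorm2. rewrite <- !sumR_scal, <- sumR_plus.
  apply sumR_le. intros j _.
  assert (0 < Rpower (Ltil n L a j) (1 - a)) by apply Rpower_gt0.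
  assert (0 <= t * (1 - t) * ((p j - q j) * (p j - q j))).
  { apply Rmult_le_pos; [nra | apply Rle_0_sqr]. }
  nra.
Qed.

Lemma derivable_pt_lim_sub_quadratic phi s l a b c : derivable_pt_lim phi s l ->
  derivable_pt_lim (fun s => phi s - (a + b * s + c * (s * s))) s (l - (b + c * (2 * s))).
Proof.
  intros H. apply (derivable_pt_lim_minus phi); [exact H|].
  replace (b + c * (2 * s)) with (0 + b * 1 + c * (1 * s + s * 1)) by ring.
  apply (derivable_pt_lim_plus (fun s => a + b * s) (fun s => c * (s * s))).
  - apply (derivable_pt_lim_plus (fun _ => a) (fun s => b * s)).
    + apply derivable_pt_lim_const.
    + apply (derivable_pt_lim_scal (fun s => s)), derivable_pt_lim_id.
  - apply (derivable_pt_lim_scal (fun s => s * s)).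
    apply (derivable_pt_lim_mult (fun s => s) (fun s => s)); apply derivable_pt_lim_id.
Qed.

Lemma quadratic_upper_bound (phi dphi : R -> R) (K : R) :
  (forall s, derivable_pt_lim phi s (dphi s)) ->
  (forall s, Rabs (dphi s - dphi 0) <= K * Rabs s) ->
  forall t, phi t <= phi 0 + t * dphi 0 + K / 2 * (t * t).
Proof.
  intros Hd HK t.
  set (psi := fun s => phi s - (phi 0 + dphi 0 * s + K / 2 * (s * s))).
  assert (Hpsi : forall s, derivable_pt_lim psi s (dphi s - (dphi 0 + K / 2 * (2 * s))))
    by (intros s; apply derivable_pt_lim_sub_quadratic, Hd).
  (* psi' s = dphi s - dphi 0 - K s, whose sign is that of -s by the Lipschitz bound *)
  assert (Hsign : forall s, dphi s - (dphi 0 + K / 2 * (2 * s)) = dphi s - dphi 0 - K * s)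
    by (intros; field).
  assert (Hbound : forall s, - (K * Rabs s) <= dphi s - dphi 0 <= K * Rabs s).
  { intros s. specialize (HK s). revert HK. unfold Rabs at 1.
    destruct (Rcase_abs (dphi s - dphi 0)); lra. }
  assert (Hpsi_t : psi t <= psi 0).
  { destruct (Rtotal_order t 0) as [Hlt|[->|Hgt]]; [| lra |].
    - destruct (MVT_cor2 psi _ t 0 Hlt (fun c _ => Hpsi c)) as [c [Hc [Hc1 Hc2]]].
      rewrite Hsign in Hc. specialize (Hbound c). rewrite Rabs_left in Hbound by lra. nra.
    - destruct (MVT_cor2 psi _ 0 t Hgt (fun c _ => Hpsi c)) as [c [Hc [Hc1 Hc2]]].
      rewrite Hsign in Hc. specialize (Hbound c). rewrite Rabs_right in Hbound by lra. nra. }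
  unfold psi in Hpsi_t. lra.
Qed.

Lemma derivable_pt_lim_shift (F : R -> R) s l :
  derivable_pt_lim (fun h => F (s + h)) 0 l -> derivable_pt_lim F s l.
Proof.
  intros H eps Heps. destruct (H eps Heps) as [d Hd]. exists d.
  intros h Hh0 Hh. specialize (Hd h Hh0 Hh). rewrite Rplus_0_l, Rplus_0_r in Hd. exact Hd.
Qed.

Lemma Eseq_mono n p k F G : (forall i, (i < n)%nat -> 0 <= p i) ->
  (forall l, F l <= G l) -> Eseq n p k F <= Eseq n p k G.
Proof.
  revert F G. induction k as [|k IH]; intros F G Hp H; simpl; auto.
  apply sumR_le. intros i Hi. apply Rmult_le_compat_l; auto.
Qed.

Lemma Eseq_shift n p k F c : sumR n p = 1 ->
  Eseq n p k (fun l => F l - c) = Eseq n p k F - c.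
Proof.
  revert F. induction k as [|k IH]; intros F Hp; simpl; auto.
  rewrite (sumR_ext _ _ (fun i => p i * Eseq n p k (fun l => F (i :: l)) + (- c) * p i)).
  - rewrite sumR_plus, sumR_scal, Hp. ring.
  - intros i _. rewrite IH by auto. ring.
Qed.

Definition vk (s : state) : vec := let '(_, _, v, _) := s in v.

Definition potential n L a sigma (f : vec -> R) (xstar : vec) (s : state) : R :=
  f (xk s) - f xstar + sigma / 2 * wnorm2 n L a (fun j => vk s j - xstar j).

Definition step_inv n L a sigma (s : state) : Prop :=
  let '(x, y, v, z) := s in z = sigma /\
  forall j, theta n L a sigma * (v j - y j) + x j - y j = 0.

Lemma step_invariant n L a sigma g s i : 0 < sigma -> step_inv n L a sigma s ->
  step_inv n L a sigma (step n L a sigma g s i).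
Proof.
  destruct s as [[[x y] v] z]. intros Hs [-> _]. unfold step; simpl.
  set (th := theta n L a sigma).
  assert (Hth : 0 <= th) by apply sqrt_pos.
  replace ((1 - th) * sigma + th * sigma) with sigma by ring.
  split; [reflexivity|]. intros j.
  replace ((1 - th) * sigma + th * sigma) with sigma by ring.
  replace (th * sigma / sigma) with th by (field; lra).
  (* y+ = (th v+ + x+) / (th + 1) whatever the coordinate moves are *)
  generalize (Stil n L a * th / Ltil n L a i * (g y i * unitv i j)).
  generalize (/ Ltil n L a i * (g y i * unitv i j)).
  intros. field. lra.
Qed.

(* The per-index quadratic term of v is dominated by the descent gain of x:
   with c = S th g / (A w sigma) and th^2 = sigma / (2 S N), where A, w are the
   two factors of tilde L_i and S <= 2 N A. *)
Lemma quadratic_term_bound A w S th sigma N gi : 0 < A -> 0 < w -> 0 < S -> 0 < sigma ->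
  0 < N -> th * th = sigma / (2 * S * N) -> S <= 2 * N * A ->
  A / S * (sigma / 2) * (w * ((S * th * gi / (A * w * sigma)) * (S * th * gi / (A * w * sigma))))
  <= A / S * (gi * gi / (2 * (A * w))).
Proof.
  intros HA Hw HS Hsig HN Hth HSA.
  replace (A / S * (sigma / 2) * (w * ((S * th * gi / (A * w * sigma)) *
             (S * th * gi / (A * w * sigma)))))
    with (gi * gi / w * / (4 * N * A))
    by (replace (S * th * gi / (A * w * sigma) * (S * th * gi / (A * w * sigma)))
          with (S * S * (th * th) * (gi * gi) / (A * w * sigma * (A * w * sigma))) by (field; lra);
        rewrite Hth; field; lra).
  replace (A / S * (gi * gi / (2 * (A * w)))) with (gi * gi / w * / (2 * S)) by (field; lra).
  apply Rmult_le_compat_l.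
  - unfold Rdiv. apply Rmult_le_pos; [apply Rle_0_sqr | left; apply Rinv_0_lt_compat, Hw].
  - apply Rinv_le_contravar; lra.
Qed.

Lemma gradient_recombination n (h x y v z : vec) th :
  (forall j, th * (v j - y j) + x j - y j = 0) ->
  th * sumR n (fun j => h j * ((1 - th) * v j + th * y j - z j))
  = - (1 - th) * sumR n (fun j => h j * (x j - y j)) - th * sumR n (fun j => h j * (z j - y j)).
Proof.
  intros Hc. rewrite <- sumR_scal.
  transitivity (sumR n (fun j => - (1 - th) * (h j * (x j - y j)) + (- th) * (h j * (z j - y j)))).
  - apply sumR_ext. intros j _.
    replace (x j) with (y j - th * (v j - y j)) by (specialize (Hc j); lra). ring.
  - rewrite sumR_plus, !sumR_scal. ring.
Qed.

Section OneStep.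

Variables (n : nat) (f : vec -> R) (g : vec -> nat -> R) (L : nat -> R) (a sigma : R).
Variable xstar : vec.
Hypothesis Hn : (1 <= n)%nat.
Hypothesis Hgrad : forall (x : vec) (i : nat), (i < n)%nat ->
  derivable_pt_lim (fun t => f (vadd x (vscal t (unitv i)))) 0 (g x i).
Hypothesis HL : forall i, (i < n)%nat -> 0 < L i.
Hypothesis HLip : forall (x : vec) (t : R) (i : nat), (i < n)%nat ->
  Rabs (g (vadd x (vscal t (unitv i))) i - g x i) <= L i * Rabs t.
Hypothesis Ha : 0 <= a.
Hypothesis Hsig : 0 < sigma.
Hypothesis Hsc : forall x y : vec,
  f y >= f x + sumR n (fun i => g x i * (y i - x i))
         + sigma / 2 * wnorm2 n L a (fun j => y j - x j).

Lemma coordinate_descent x i t : (i < n)%nat ->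
  f (vadd x (vscal t (unitv i))) <= f x + t * g x i + L i / 2 * (t * t).
Proof.
  intros Hi.
  assert (Hmove : forall s h, vadd (vadd x (vscal s (unitv i))) (vscal h (unitv i))
                             = vadd x (vscal (s + h) (unitv i)))
    by (intros; apply functional_extensionality; intro j; unfold vadd, vscal; ring).
  assert (Hzero : vadd x (vscal 0 (unitv i)) = x)
    by (apply functional_extensionality; intro j; unfold vadd, vscal; ring).
  pose proof (quadratic_upper_bound (fun s => f (vadd x (vscal s (unitv i))))
    (fun s => g (vadd x (vscal s (unitv i))) i) (L i)) as Hq.
  cbv beta in Hq. rewrite Hzero in Hq. apply Hq.
  - intros s. apply derivable_pt_lim_shift.
    apply (derivable_pt_lim_ext (fun h => f (vadd (vadd x (vscal s (unitv i))) (vscal h (unitv i))))).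
    + intros h. rewrite Hmove. reflexivity.
    + apply Hgrad, Hi.
  - intros s. apply HLip, Hi.
Qed.

Lemma gradient_step_decrease y i : (i < n)%nat ->
  f (fun j => y j - / Ltil n L a i * (g y i * unitv i j))
  <= f y - g y i * g y i / (2 * Ltil n L a i).
Proof.
  intros Hi. pose proof (Ltil_pos n L a HL i Hi) as Hpos.
  pose proof (L_le_Ltil n L a HL Ha i Hi) as HLL.
  set (Lt := Ltil n L a i) in *. set (gi := g y i).
  replace (fun j => y j - / Lt * (gi * unitv i j)) with (vadd y (vscal (- gi / Lt) (unitv i)))
    by (apply functional_extensionality; intro j; unfold vadd, vscal, Rdiv; ring).
  eapply Rle_trans; [apply coordinate_descent, Hi|]. fold gi.
  assert (Hquad : L i / 2 * (- gi / Lt * (- gi / Lt)) <= Lt / 2 * (- gi / Lt * (- gi / Lt)))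
    by (apply Rmult_le_compat_r; [apply Rle_0_sqr | lra]).
  replace (Lt / 2 * (- gi / Lt * (- gi / Lt))) with (gi * gi / (2 * Lt)) in Hquad by (field; lra).
  replace (- gi / Lt * gi) with (- 2 * (gi * gi / (2 * Lt))) by (field; lra). lra.
Qed.

(* Strong convexity along e_0 against the descent lemma forces sigma <= tilde S_a. *)
Lemma sigma_le_Stil : sigma <= Stil n L a.
Proof.
  pose (x0 := (fun _ => 0) : vec).
  assert (H0 : (0 < n)%nat) by lia.
  pose proof (Ltil_pos n L a HL 0 H0) as Hpos. pose proof (L_le_Ltil n L a HL Ha 0 H0).
  pose proof (Rpower_split (Ltil n L a 0) a Hpos) as Hsplit.
  set (A := Rpower (Ltil n L a 0) a) in *. set (w := Rpower (Ltil n L a 0) (1 - a)) in *.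
  assert (Hw : 0 < w) by apply Rpower_gt0.
  set (y := vadd x0 (vscal 1 (unitv 0))).
  pose proof (Hsc x0 y) as Hlow. pose proof (coordinate_descent x0 0 1 H0) as Hup. fold y in Hup.
  rewrite (sumR_ext _ _ (fun i => g x0 i * unitv 0 i)), sumR_unit in Hlow
    by (lia || (intros; unfold y, vadd, vscal; ring)).
  assert (Hwn : wnorm2 n L a (fun j => y j - x0 j) = w).
  { unfold wnorm2. rewrite (sumR_ext _ _ (fun j => Rpower (Ltil n L a j) (1 - a) * unitv 0 j)).
    - apply sumR_unit; lia.
    - intros j _. unfold y, vadd, vscal, unitv. destruct (Nat.eq_dec j 0); ring. }
  rewrite Hwn in Hlow.
  assert (sigma <= A) by (apply Rmult_le_reg_r with w; nra).
  apply Rle_trans with A; [assumption|].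
  apply (sumR_term n (fun i => Rpower (Ltil n L a i) a)); [intros; left; apply Rpower_gt0 | lia].
Qed.

Lemma theta_bounds : 0 <= theta n L a sigma <= 1.
Proof.
  pose proof sigma_le_Stil. pose proof (Stil_pos n L a Hn). pose proof (INR_n_pos n Hn).
  assert (1 <= INR n) by (apply (le_INR 1); lia).
  split; [apply sqrt_pos|]. unfold theta. rewrite <- sqrt_1. apply sqrt_le_1_alt.
  apply Rmult_le_reg_r with (2 * Stil n L a * INR n); [nra|].
  unfold Rdiv. rewrite Rmult_assoc, Rinv_l by nra. nra.
Qed.

Lemma step_potential_index x y v i : (i < n)%nat ->
  prob n L a i * potential n L a sigma f xstar (step n L a sigma g (x, y, v, sigma) i)
  <= prob n L a i * (f y - f xstar + sigma / 2 *
        wnorm2 n L a (fun j => (1 - theta n L a sigma) * v j + theta n L a sigma * y j - xstar j))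
     - theta n L a sigma * (g y i * ((1 - theta n L a sigma) * v i
                                     + theta n L a sigma * y i - xstar i)).
Proof.
  intros Hi.
  pose proof (Stil_pos n L a Hn) as HSt. pose proof (INR_n_pos n Hn).
  pose proof (Ltil_pos n L a HL i Hi) as HLt.
  pose proof (Rpower_split (Ltil n L a i) a HLt) as Hsplit.
  pose proof (Stil_le_weight n L a Hn Ha i) as HSA.
  set (th := theta n L a sigma) in *. set (St := Stil n L a) in *.
  set (Lt := Ltil n L a i) in *.
  set (A := Rpower Lt a) in *. set (w := Rpower Lt (1 - a)) in *.
  assert (HA : 0 < A) by apply Rpower_gt0. assert (Hw : 0 < w) by apply Rpower_gt0.
  assert (Hth2 : th * th = sigma / (2 * St * INR n))
    by (apply sqrt_sqrt; left; apply Rdiv_lt_0_compat; nra).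
  set (b := fun j => (1 - th) * v j + th * y j - xstar j).
  set (gi := g y i). set (c := St * th * gi / (A * w * sigma)).
  assert (Hv : (fun j => ((1 - th) * sigma * v j + th * sigma * y j
                          - St * th / Lt * (gi * unitv i j)) / sigma - xstar j)
               = (fun j => b j - c * unitv i j))
    by (apply functional_extensionality; intro j; unfold b, c; rewrite Hsplit; field; lra).
  unfold potential, step. simpl xk. simpl vk. fold th St Lt gi.
  replace ((1 - th) * sigma + th * sigma) with sigma by ring.
  rewrite Hv, wnorm2_unit by exact Hi. fold Lt w. change (prob n L a i) with (A / St).
  pose proof (gradient_step_decrease y i Hi) as Hdec. fold Lt gi in Hdec.
  pose proof (quadratic_term_bound A w St th sigma (INR n) gi HA Hw HSt Hsig
                ltac:(assumption) Hth2 ltac:(lra)) as Hquad. fold c in Hquad.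
  rewrite <- Hsplit in Hquad.
  assert (Hlin : A / St * (sigma / 2) * (2 * c * w * b i) = th * (gi * b i))
    by (unfold c; field; lra).
  assert (0 <= A / St) by (left; apply Rdiv_lt_0_compat; lra).
  assert (A / St * f (fun j => y j - / Lt * (gi * unitv i j))
          <= A / St * (f y - gi * gi / (2 * Lt))) by (apply Rmult_le_compat_l; assumption).
  change ((1 - th) * v i + th * y i - xstar i) with (b i). nra.
Qed.

Lemma step_potential_contraction x y v :
  (forall j, theta n L a sigma * (v j - y j) + x j - y j = 0) ->
  sumR n (fun i => prob n L a i * potential n L a sigma f xstar (step n L a sigma g (x, y, v, sigma) i))
  <= (1 - theta n L a sigma) * potential n L a sigma f xstar (x, y, v, sigma).
Proof.
  intros Hinv. pose proof theta_bounds as Hth.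
  set (th := theta n L a sigma) in *.
  set (b := fun j => (1 - th) * v j + th * y j - xstar j).
  set (W := wnorm2 n L a b).
  eapply Rle_trans; [apply sumR_le; intros i Hi; exact (step_potential_index x y v i Hi)|].
  fold th. fold b W.
  rewrite (sumR_ext _ _ (fun i => (f y - f xstar + sigma / 2 * W) * prob n L a i
                                 + (- th) * (g y i * b i))) by (intros; unfold b; ring).
  rewrite sumR_plus, !sumR_scal, (prob_sum n L a Hn).
  set (V := wnorm2 n L a (fun j => v j - xstar j)).
  set (Y := wnorm2 n L a (fun j => y j - xstar j)).
  set (G1 := sumR n (fun j => g y j * (x j - y j))).
  set (G2 := sumR n (fun j => g y j * (xstar j - y j))).
  (* b is a convex combination of v - x* and y - x*. *)
  assert (HW : W <= (1 - th) * V + th * Y).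
  { unfold W. replace b with (fun j => (1 - th) * (v j - xstar j) + th * (y j - xstar j))
      by (apply functional_extensionality; intro j; unfold b; ring).
    apply wnorm2_convex; lra. }
  assert (HG : th * sumR n (fun i => g y i * b i) = - (1 - th) * G1 - th * G2)
    by exact (gradient_recombination n (g y) x y v xstar th Hinv).
  pose proof (Hsc y x) as Hscx. pose proof (Hsc y xstar) as Hscs.
  rewrite wnorm2_sym in Hscs. fold G1 in Hscx. fold G2 Y in Hscs.
  pose proof (wnorm2_nonneg n L a (fun j => x j - y j)).
  unfold potential. simpl xk. simpl vk. fold V.
  assert ((1 - th) * (f y + G1) <= (1 - th) * f x) by (apply Rmult_le_compat_l; nra).
  assert (sigma / 2 * W <= sigma / 2 * ((1 - th) * V + th * Y)) by (apply Rmult_le_compat_l; lra).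
  assert (th * (f y + G2 + sigma / 2 * Y) <= th * f xstar) by (apply Rmult_le_compat_l; lra).
  nra.
Qed.

Lemma potential_contraction : forall k s, step_inv n L a sigma s ->
  Eseq n (prob n L a) k (fun l => potential n L a sigma f xstar (fold_left (step n L a sigma g) l s))
  <= (1 - theta n L a sigma) ^ k * potential n L a sigma f xstar s.
Proof.
  pose proof theta_bounds as Hth.
  induction k as [|k IH]; intros s Hs; simpl Eseq; [lra|].
  eapply Rle_trans.
  { apply sumR_le. intros i Hi. apply Rmult_le_compat_l; [apply prob_nonneg; assumption|].
    apply IH, step_invariant; assumption. }
  rewrite (sumR_ext _ _ (fun i => (1 - theta n L a sigma) ^ k *
     (prob n L a i * potential n L a sigma f xstar (step n L a sigma g s i))))
    by (intros; cbv beta; ring).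
  rewrite sumR_scal. simpl pow.
  destruct s as [[[x y] v] z]. destruct Hs as [-> Hj].
  rewrite (Rmult_comm (1 - theta n L a sigma)), Rmult_assoc.
  apply Rmult_le_compat_l; [apply pow_le; lra|].
  apply step_potential_contraction; assumption.
Qed.

End OneStep.

(* The rate 1 - theta is at least as good as the claimed one, since
   tilde S_a <= 2 S_a. *)
Lemma rate_comparison n L a sigma : (1 <= n)%nat -> (forall i, (i < n)%nat -> 0 < L i) ->
  0 <= a -> 0 < sigma ->
  1 - theta n L a sigma <= 1 - / 2 * sqrt (sigma / (S_pow n L a * INR n)).
Proof.
  intros Hn HL Ha Hsig.
  pose proof (Stil_le_2S n L a Hn Ha). pose proof (S_pow_pos n L a Hn).
  pose proof (Stil_pos n L a Hn). pose proof (INR_n_pos n Hn).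
  set (S := S_pow n L a) in *. set (St := Stil n L a) in *.
  assert (/ 2 * sqrt (sigma / (S * INR n)) <= theta n L a sigma); [|lra].
  assert (Hs0 : 0 <= / 2 * sqrt (sigma / (S * INR n)))
    by (apply Rmult_le_pos; [lra | apply sqrt_pos]).
  rewrite <- (sqrt_square _ Hs0). unfold theta. fold St. apply sqrt_le_1_alt.
  replace (/ 2 * sqrt (sigma / (S * INR n)) * (/ 2 * sqrt (sigma / (S * INR n))))
    with (/ 4 * (sqrt (sigma / (S * INR n)) * sqrt (sigma / (S * INR n)))) by field.
  rewrite sqrt_sqrt by (left; apply Rdiv_lt_0_compat; nra).
  replace (/ 4 * (sigma / (S * INR n))) with (sigma * / (4 * S * INR n)) by (field; lra).
  unfold Rdiv. apply Rmult_le_compat_l; [lra|].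
  apply Rinv_le_contravar; nra.
Qed.

Theorem mainTheorem3 (n : nat) (f : vec -> R) (g : vec -> nat -> R)
  (L : nat -> R) (alpha sigma : R) (xstar x0 : vec)
  (Hn : (1 <= n)%nat)
  (* f is a function on R^n: depends only on coordinates 0..n-1 *)
  (Hdep : forall x y : vec, (forall i, (i < n)%nat -> x i = y i) -> f x = f y)
  (* g x i = f_i(x) = e_i^T grad f(x) *)
  (Hgrad : forall (x : vec) (i : nat), (i < n)%nat ->
     derivable_pt_lim (fun t => f (vadd x (vscal t (unitv i)))) 0 (g x i))
  (* the gradient is continuous (f is C^1) *)
  (Hcont : forall (x : vec) (i : nat), (i < n)%nat -> forall eps, 0 < eps ->
     exists delta, 0 < delta /\ forall y : vec,
       (forall j, (j < n)%nat -> Rabs (y j - x j) < delta) ->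
       Rabs (g y i - g x i) < eps)
  (* f convex *)
  (Hconv : forall (x y : vec) (lam : R), 0 <= lam <= 1 ->
     f (fun j => lam * x j + (1 - lam) * y j) <= lam * f x + (1 - lam) * f y)
  (* x* is a minimizer, f* = f x* *)
  (Hmin : forall x : vec, f xstar <= f x)
  (HL : forall i, (i < n)%nat -> 0 < L i)
  (* coordinate-wise Lipschitz constants *)
  (HLip : forall (x : vec) (t : R) (i : nat), (i < n)%nat ->
     Rabs (g (vadd x (vscal t (unitv i))) i - g x i) <= L i * Rabs t)
  (Ha : 0 <= alpha)
  (Hsig : 0 < sigma)
  (* sigma_{1-alpha} is a convexity parameter w.r.t. ||.||_{1-alpha} *)
  (Hsc : forall x y : vec,
     f y >= f x + sumR n (fun i => g x i * (y i - x i))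
            + sigma / 2 * wnorm2 n L alpha (fun j => y j - x j)) :
  forall k : nat,
    Eseq n (prob n L alpha) k (fun l => f (xk (iterate n L alpha sigma g x0 l)))
      - f xstar
    <= (1 - / 2 * sqrt (sigma / (S_pow n L alpha * INR n))) ^ k
       * (f x0 - f xstar + sigma * wnorm2 n L alpha (fun j => xstar j - x0 j)).
Proof.
  intros k.
  set (Phi := potential n L alpha sigma f xstar).
  set (s0 := (x0, x0, x0, sigma) : state).
  pose proof (theta_bounds n f g L alpha sigma Hn Hgrad HL HLip Ha Hsig Hsc) as Hth.
  pose proof (rate_comparison n L alpha sigma Hn HL Ha Hsig) as Hrate.
  pose proof (wnorm2_nonneg n L alpha (fun j => xstar j - x0 j)) as Hw0.
  assert (HPhi0 : Phi s0 = f x0 - f xstar + sigma / 2 * wnorm2 n L alpha (fun j => xstar j - x0 j))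
    by (unfold Phi, potential, s0; simpl; rewrite wnorm2_sym; reflexivity).
  assert (0 <= Phi s0) by (pose proof (Hmin x0); nra).
  rewrite <- Eseq_shift by exact (prob_sum n L alpha Hn).
  eapply Rle_trans.
  { apply Eseq_mono with (G := fun l => Phi (fold_left (step n L alpha sigma g) l s0));
      [intros; apply prob_nonneg; assumption|].
    intros l. unfold Phi, potential, iterate. fold s0.
    pose proof (wnorm2_nonneg n L alpha
      (fun j => vk (fold_left (step n L alpha sigma g) l s0) j - xstar j)). nra. }
  eapply Rle_trans.
  { apply (potential_contraction n f g L alpha sigma xstar Hn Hgrad HL HLip Ha Hsig Hsc).
    split; [reflexivity | intros; ring]. }
  fold Phi.
  apply Rmult_le_compat; [apply pow_le; lra | assumption | apply pow_incr; lra | nra].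
Qed.
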